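(* Let $\Lambda$ be a cohomology algebra of $b^+=1$ type with $I_T=0$ and $\Gamma\cong\langle1\rangle\oplus n\langle-1\rangle$, $0\le n\le 9$, with orthogonal basis $\{H,E_1,\dots,E_n\}$ of $\Lambda^2$, $H\cdot H=1$, $E_i\cdot E_i=-1$. Let $A=aH-\sum_{i=1}^n b_iE_i\ne0$ be reduced with $A\cdot A\ge0$. Then $c_0=3H-\sum_{i=1}^nE_i$ is an adjunction class and $$h(A)=h_{c_0}(A)=\frac{(a-1)(a-2)-\sum_{i=1}^n b_i(b_i-1)}{2}=\binom{a-1}{2}-\sum_{i=1}^n\binom{b_i}{2}.$$
   Context: Notation: $\Lambda$ a cohomology algebra (graded commutative algebra over $\mathbb{Z}$, free of finite rank in each degree, $p:\Lambda^4\cong\mathbb{Z}$ with perfect pairings $\Lambda^i\times\Lambda^{4-i}\to\mathbb{Z}$); $\Gamma(x,y)=x\cdot y=p(xy)$ on $\Lambda^2$, signature $\sigma$; $I_T\subseteq\Lambda^2$ is the subgroup generated by products of elements of $\Lambda^1$. Characteristic: $c\cdot A\equiv A\cdot A\pmod 2$ for all $A$. Since $I_T=0$, the adjunction classes are the characteristic classes $c$ with $c\cdot c>\sigma(\Lambda)$ (equivalently $c\cdot c\ge\sigma+8$). $h_c(A)=1+\frac{A\cdot A-|c\cdot A|}{2}$ for $A\ne0$, $h_c(0)=0$; $h(A)=\max_c h_c(A)$ over adjunction classes. $A=aH-\sum b_iE_i$ is reduced if $b_1\ge b_2\ge\dots\ge b_n\ge0$ and $a\ge b_1$ if $n=1$,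 $a\ge b_1+b_2$ if $n=2$, $a\ge b_1+b_2+b_3$ if $n\ge3$ ($a\ge0$ if $n=0$). *)

From HB Require Import structures.
From mathcomp Require Import all_boot all_order all_algebra.
Set Implicit Arguments. Unset Strict Implicit. Unset Printing Implicit Defensive.
Import Order.TTheory GRing.Theory Num.Theory.
Local Open Scope ring_scope.

(* Lambda^2 of a cohomology algebra with Gamma = <1> + n<-1>, expressed in the
   orthogonal basis {H, E_1, ..., E_n} (E_{i+1} is indexed by i : 'I_n).
   A class (a, b) stands for  a H - \sum_i b_i E_i. *)
Definition cls (n : nat) := (int * {ffun 'I_n -> int})%type.

Definition mkcls (n : nat) (a : int) (b : 'I_n -> int) : cls n := (a, [ffun i => b i]).

Definition zero_cls (n : nat) : cls n := (0, [ffun _ => 0]).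

Definition dot (n : nat) (x y : cls n) : int :=
  x.1 * y.1 - \sum_(i < n) x.2 i * y.2 i.

Definition sigma (n : nat) : int := 1 - n%:Z.

Definition characteristic (n : nat) (c : cls n) : Prop :=
  forall A : cls n, (dot c A = dot A A %[mod 2])%Z.

(* I_T = 0: adjunction classes = characteristic classes with c.c > sigma. *)
Definition adjunction (n : nat) (c : cls n) : Prop :=
  characteristic c /\ sigma n < dot c c.

Definition h_c (n : nat) (c A : cls n) : int :=
  if A == zero_cls n then 0 else 1 + ((dot A A - `|dot c A|) %/ 2)%Z.

Definition is_h (n : nat) (A : cls n) (v : int) : Prop :=
  (exists2 c, adjunction c & h_c c A = v) /\
  (forall c, adjunction c -> h_c c A <= v).

Definition reduced (n : nat) (A : cls n) : Prop :=
  (forall i j : 'I_n, (i <= j)%N -> A.2 j <= A.2 i) /\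
  (forall i : 'I_n, 0 <= A.2 i) /\
  \sum_(i < n | (i < 3)%N) A.2 i <= A.1.

Definition c0 (n : nat) : cls n := mkcls 3 (fun _ => 1).

From mathcomp Require Import all_boot all_order all_algebra.
From mathcomp Require Import zify ring.
Set Implicit Arguments.
Unset Strict Implicit.
Unset Printing Implicit Defensive.
Import Order.TTheory GRing.Theory Num.Theory.
Local Open Scope ring_scope.

(* An adjunction class [c = k H - \sum_i m_i E_i] is characteristic, so [k] and
   all [m_i] are odd; as odd squares are 1 mod 8, [c.c > sigma] sharpens to
   [\sum_i (m_i^2 - 1) <= k^2 - 9]. Replacing [c] by [-c] we may take [k > 0],
   and [c0.A <= |c.A|] reduces to [\sum_i (|m_i| - 1) b_i <= (k - 3) a]. As [b]
   is nonincreasing, Abel summation reduces this to the prefix bounds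
   [\sum_(i < p) (|m_i| - 1) <= (k - 3) min(p, 3)], which follow from
   Cauchy-Schwarz and parity for [p <= 9], while [b_1 + b_2 + b_3 <= a].
   Hence [h_c(A) <= h_c0(A)] for every adjunction class [c]; since [c0.A >= 0],
   [h_c0(A)] is given by the closed formula. *)

Lemma sqr_sum_le_sum_sqr (R : realDomainType) (p : nat) (F : 'I_p -> R) :
  (\sum_(i < p) F i) ^+ 2 <= p%:R * \sum_(i < p) F i ^+ 2.
Proof.
set T := \sum_(i < p) F i; set Q := \sum_(i < p) F i ^+ 2.
have expand i : \sum_(j < p) (F i - F j) ^+ 2 = p%:R * F i ^+ 2 + Q - 2 * F i * T.
  rewrite (eq_bigr (fun j => F i ^+ 2 + F j ^+ 2 - 2 * F i * F j)); last first.
    by move=> j _; rewrite sqrrB; ring.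
  by rewrite sumrB big_split /= sumr_const card_ord -mulr_sumr -/Q -/T; ring.
have lagrange : \sum_(i < p) \sum_(j < p) (F i - F j) ^+ 2 = 2 * (p%:R * Q - T ^+ 2).
  rewrite (eq_bigr _ (fun i _ => expand i)) sumrB big_split /= sumr_const card_ord.
  by rewrite -mulr_sumr -mulr_suml -mulr_sumr -/Q -/T; ring.
rewrite -subr_ge0 -(pmulr_rge0 _ (ltr0Sn _ 1)) -lagrange.
by apply: sumr_ge0 => i _; apply: sumr_ge0 => j _; apply: sqr_ge0.
Qed.

Lemma abel_sum_ge0 (R : realDomainType) (N : nat) (d w : nat -> R) :
  (forall j, (j <= N)%N -> 0 <= \sum_(i < j) d i) ->
  (forall i j, (i <= j < N)%N -> w j <= w i) ->
  (forall i, (i < N)%N -> 0 <= w i) ->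
  0 <= \sum_(i < N) d i * w i.
Proof.
elim: N w => [|N IH] w hd hw hw0; first by rewrite big_ord0.
have split_last : \sum_(i < N.+1) d i * w i
    = \sum_(i < N) d i * (w i - w N) + w N * \sum_(i < N.+1) d i.
  have -> : \sum_(i < N) d i * (w i - w N)
      = \sum_(i < N) d i * w i - w N * \sum_(i < N) d i.
    by rewrite mulr_sumr -sumrB; apply: eq_bigr => i _; ring.
  by rewrite !big_ord_recr /=; ring.
rewrite split_last addr_ge0 //; last by rewrite mulr_ge0 ?hw0 ?hd.
apply: (IH (fun i => w i - w N)) => [j hj|i j /andP[hij hj]|i hi].
- exact/hd/leqW.
- by rewrite lerD2r hw // hij ltnW.
- by rewrite subr_ge0; apply: hw; rewrite (ltnW hi) /=.
Qed.

Lemma sum_ltn_indicator (j m : nat) :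
  \sum_(i < j) ((i < m)%N%:R : int) = (minn j m)%:Z.
Proof.
elim: j => [|j IH]; first by rewrite big_ord0 min0n.
by rewrite big_ord_recr /= IH; case: ltnP => hjm; rewrite /= ?addr0; lia.
Qed.

(* Were the bound to fail, parity would give [T >= K q + 2]; together with
   Cauchy-Schwarz [T^2 <= p Q] this exceeds [K^2 + 6 K] as long as [p <= 9]. *)
Lemma prefix_sum_le (p : nat) (y : nat -> int) (K : int) :
  (p <= 9)%N -> 0 <= K -> (2 %| K)%Z ->
  (forall i, (i < p)%N -> 0 <= y i /\ (2 %| y i)%Z) ->
  \sum_(i < p) (y i ^+ 2 + 2 * y i) <= K ^+ 2 + 6 * K ->
  \sum_(i < p) y i <= K * (minn p 3)%:Z.
Proof.
move=> p9 K0 K2 hy hsum; set T := \sum_(i < p) y i.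
have T2 : (2 %| T)%Z by apply: rpred_sum => i _; case: (hy i (ltn_ord i)).
have cs_bound : T ^+ 2 + 2 * p%:Z * T <= p%:Z * (K ^+ 2 + 6 * K).
  rewrite big_split /= -mulr_sumr -/T in hsum.
  have cs : T ^+ 2 <= p%:Z * \sum_(i < p) y i ^+ 2 by rewrite -natz; exact: sqr_sum_le_sum_sqr.
  move: cs hsum; set Q := \sum_(i < p) _ => cs hsum.
  have := ler_wpM2l (isT : 0 <= p%:Z) hsum; rewrite !expr2 in cs *; nia.
rewrite leNgt; apply/negP => hT.
have {}hT : K * (minn p 3)%:Z + 2 <= T.
  have : (2 %| K * (minn p 3)%:Z)%Z by exact: dvdz_mulr.
  lia.
move: cs_bound hT; rewrite !expr2; move: (T) => t.
by case: p {T2 hy hsum T} p9 => [|[|[|[|[|[|[|[|[|[|p]]]]]]]]]] //= _; nia.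
Qed.

Lemma sum_mul_pred (R : pzRingType) (p : nat) (F : 'I_p -> R) :
  \sum_(i < p) F i * (F i - 1) = \sum_(i < p) F i * F i - \sum_(i < p) F i.
Proof. by rewrite -sumrB; apply: eq_bigr => i _; rewrite mulrBr mulr1. Qed.

Lemma dvdz_mul_pred (x : int) : (2 %| x * (x - 1))%Z.
Proof.
have [x_even|x_odd] := boolP (2 %| x)%Z; first exact: dvdz_mulr.
by apply: dvdz_mull; lia.
Qed.

Lemma odd_sqr_mod8 (x : int) : (2 %| x - 1)%Z -> (8 %| x ^+ 2 - 1)%Z.
Proof.
move=> /dvdzP [q hq]; have /dvdzP [r hr] := dvdz_mul_pred (q + 1).
apply/dvdzP; exists r; have -> : x = q * 2 + 1 by lia.
by rewrite expr2; nia.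
Qed.

Lemma bin2_int (x : int) : 0 <= x -> 2 * ('C(`|x|%N, 2))%:Z = x * (x - 1).
Proof.
case: x => // u _; rewrite /= bin2; case: u => [|u] //=.
have := halfK (u.+1 * u); rewrite oddM /= andNb subn0; lia.
Qed.

Section Classes.

Variable n : nat.
Implicit Types (c A : cls n).

Lemma dotNl c A : dot (- c) A = - dot c A.
Proof.
rewrite /dot /= (eq_bigr (fun i => - (c.2 i * A.2 i))) ?sumrN; first by ring.
by move=> i _; rewrite ffunE mulNr.
Qed.

Lemma dotNr c A : dot c (- A) = - dot c A.
Proof.
rewrite /dot /= (eq_bigr (fun i => - (c.2 i * A.2 i))) ?sumrN; first by ring.
by move=> i _; rewrite ffunE mulrN.
Qed.

Lemma dot_c0 A : dot (c0 n) A = 3 * A.1 - \sum_(i < n) A.2 i.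
Proof. by rewrite /dot /=; congr (_ - _); apply: eq_bigr => i _; rewrite ffunE mul1r. Qed.

Lemma characteristic_c0 : characteristic (c0 n).
Proof.
move=> A; apply/eqP; rewrite eqz_mod_dvd dot_c0 /dot.
have -> : 3 * A.1 - \sum_(i < n) A.2 i - (A.1 * A.1 - \sum_(i < n) A.2 i * A.2 i)
    = 2 * A.1 - A.1 * (A.1 - 1) + \sum_(i < n) A.2 i * (A.2 i - 1).
  by rewrite sum_mul_pred; ring.
apply: rpredD; last by apply: rpred_sum => i _; exact: dvdz_mul_pred.
by rewrite rpredB ?dvdz_mul_pred // dvdz_mulr.
Qed.

Lemma adjunction_c0 : adjunction (c0 n).
Proof.
split; first exact: characteristic_c0.
rewrite dot_c0 /sigma /= (eq_bigr (fun _ => 1)) => [|i _]; last by rewrite ffunE.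
by rewrite sumr_const card_ord; lia.
Qed.

Lemma adjunctionN c : adjunction c -> adjunction (- c).
Proof.
move=> [hc hcc]; split; last by rewrite dotNl dotNr opprK.
move=> A; rewrite dotNl -(hc A); lia.
Qed.

Lemma characteristic_odd c :
  characteristic c -> (2 %| c.1 - 1)%Z /\ forall i, (2 %| c.2 i - 1)%Z.
Proof.
move=> hc; split.
  have := hc (mkcls 1 (fun _ => 0)).
  by rewrite /dot /= !big1 => [|i _|i _]; rewrite ?ffunE ?mulr0 //; lia.
move=> i; pose E := mkcls 0 (fun j => (j == i)%:R).
have dotE c' : dot c' E = - c'.2 i.
  rewrite /dot /= (bigD1 i) //= big1 => [|j /negbTE ji]; last by rewrite ffunE ji mulr0.
  by rewrite ffunE eqxx mulr1 mulr0 addr0 sub0r.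
by have := hc E; rewrite !dotE /E /= ffunE eqxx; lia.
Qed.

Lemma adjunction_sqr_le c :
  adjunction c -> \sum_(i < n) (c.2 i ^+ 2 - 1) <= c.1 ^+ 2 - 9.
Proof.
move=> [hc hcc]; have [k_odd m_odd] := characteristic_odd hc.
have k8 := odd_sqr_mod8 k_odd.
have m8 : (8 %| \sum_(i < n) (c.2 i ^+ 2 - 1))%Z.
  by apply: rpred_sum => i _; exact: odd_sqr_mod8.
move: m8.
have -> : \sum_(i < n) (c.2 i ^+ 2 - 1) = \sum_(i < n) c.2 i * c.2 i - n%:Z.
  rewrite sumrB sumr_const card_ord -mulr_natr natz mul1r.
  by congr (_ - _); apply: eq_bigr => i _; rewrite expr2.
by move: hcc; rewrite /sigma /dot expr2; lia.
Qed.

Lemma reduced_ge1 A : A <> zero_cls n -> reduced A -> 1 <= A.1.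
Proof.
case: A => a b A_nz [b_decr [b_ge0 b3_le_a]] /=; rewrite /= in b_decr b_ge0 b3_le_a.
have a_ge0 : 0 <= a by apply: le_trans b3_le_a; exact: sumr_ge0.
suff : a != 0 by lia.
apply: contra_notN A_nz => /eqP a0.
rewrite /zero_cls a0; congr (_, _); apply/ffunP => i; rewrite ffunE.
have i0 : (0 < n)%N by apply: leq_ltn_trans (ltn_ord i).
have b0_le : b (Ordinal i0) <= a.
  apply: le_trans b3_le_a; rewrite (bigD1 (Ordinal i0)) //= lerDl.
  exact: sumr_ge0.
apply/eqP; rewrite eq_le b_ge0 andbT -a0.
exact: le_trans (b_decr (Ordinal i0) i (leq0n i)) b0_le.
Qed.

Lemma reduced_weighted_sum_le A (y : 'I_n -> int) (K : int) :
  (n <= 9)%N -> reduced A -> 0 <= K -> (2 %| K)%Z ->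
  (forall i, 0 <= y i /\ (2 %| y i)%Z) ->
  \sum_(i < n) (y i ^+ 2 + 2 * y i) <= K ^+ 2 + 6 * K ->
  \sum_(i < n) y i * A.2 i <= K * A.1.
Proof.
move=> n9 [b_decr [b_ge0 b3_le_a]] K0 K2 hy hsum.
pose yn j := oapp y 0 (insub j : option 'I_n).
pose bn j := oapp A.2 0 (insub j : option 'I_n).
have ynE (i : 'I_n) : yn i = y i by rewrite /yn valK.
have bnE (i : 'I_n) : bn i = A.2 i by rewrite /bn valK.
have hyn j : 0 <= yn j /\ (2 %| yn j)%Z.
  by rewrite /yn; case: insubP => [i _ _|_] /=; [exact: hy | rewrite dvdz0].
have prefix j : (j <= n)%N -> \sum_(i < j) yn i <= K * (minn j 3)%:Z.
  move=> jn; apply: prefix_sum_le => //; first exact: leq_trans n9.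
  apply: le_trans hsum; rewrite (big_ord_widen n (fun i => yn i ^+ 2 + 2 * yn i) jn).
  rewrite big_mkcond /=; apply: ler_sum => i _; rewrite ynE.
  by case: ifP => // _; have [y0 _] := hy i; rewrite addr_ge0 ?sqr_ge0 ?mulr_ge0.
have weighted_le : \sum_(i < n) y i * A.2 i <= K * \sum_(i < n | (i < 3)%N) A.2 i.
  have := @abel_sum_ge0 _ n (fun i => K * (i < 3)%N%:R - yn i) bn.
  rewrite (eq_bigr (fun i : 'I_n => K * (if (i < 3)%N then A.2 i else 0) - y i * A.2 i));
    last by move=> i _; rewrite ynE bnE; case: ifP => _; rewrite /= ?mulr1 ?mulr0; ring.
  rewrite sumrB -mulr_sumr -big_mkcond subr_ge0; apply.
  - by move=> j jn; rewrite sumrB -mulr_sumr sum_ltn_indicator subr_ge0 prefix.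
  - move=> i j /andP [ij jn]; have i_n := leq_ltn_trans ij jn.
    by move: (bnE (Ordinal jn)) (bnE (Ordinal i_n)) => /= -> ->; apply: b_decr.
  - by move=> i i_n; move: (bnE (Ordinal i_n)) => /= ->.
exact: le_trans weighted_le (ler_wpM2l K0 b3_le_a).
Qed.

Lemma dot_c0_ge0 A : (n <= 9)%N -> reduced A -> 0 <= dot (c0 n) A.
Proof.
move=> n9 redA.
(* The weights [y_i = 3 - 1], [K = 9 - 3] of the class [9H - 3 \sum_i E_i]. *)
have sum_le : \sum_(i < n) ((2 : int) ^+ 2 + 2 * 2) <= 6 ^+ 2 + 6 * 6.
  by rewrite sumr_const card_ord -[_ *+ n]mulr_natl natz; lia.
have := reduced_weighted_sum_le (y := fun _ => 2) (K := 6) n9 redA isT isT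
  (fun _ => conj isT isT) sum_le.
by rewrite -mulr_sumr dot_c0; move: (\sum_(i < n) A.2 i) => s; lia.
Qed.

Lemma dot_c0_le_adjunction c A :
  (n <= 9)%N -> reduced A -> adjunction c -> dot (c0 n) A <= `|dot c A|.
Proof.
move=> n9 redA; wlog k_pos : c / 0 < c.1 => [hwlog hc|hc].
  have [k_odd _] := characteristic_odd hc.1.
  have [k_gt0|k_le0] := ltP 0 c.1; first exact: hwlog.
  by rewrite -normrN -dotNl; apply: hwlog (adjunctionN hc) => /=; lia.
have [_ m_odd] := characteristic_odd hc.1.
have hy i : 0 <= `|c.2 i| - 1 /\ (2 %| `|c.2 i| - 1)%Z by have := m_odd i; lia.
have sqr_norm i : (`|c.2 i| - 1) ^+ 2 + 2 * (`|c.2 i| - 1) = c.2 i ^+ 2 - 1.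
  by rewrite -(real_normK (num_real (c.2 i))); ring.
have hsum : \sum_(i < n) ((`|c.2 i| - 1) ^+ 2 + 2 * (`|c.2 i| - 1))
    <= (c.1 - 3) ^+ 2 + 6 * (c.1 - 3).
  under eq_bigr do rewrite sqr_norm.
  by apply: le_trans (adjunction_sqr_le hc) _; rewrite !expr2; lia.
have K_ge0 : 0 <= c.1 - 3.
  have : 0 <= \sum_(i < n) ((`|c.2 i| - 1) ^+ 2 + 2 * (`|c.2 i| - 1)).
    by apply: sumr_ge0 => i _; have [y0 _] := hy i; rewrite addr_ge0 ?sqr_ge0 ?mulr_ge0.
  move: hsum; rewrite !expr2; nia.
have K_even : (2 %| c.1 - 3)%Z by have [k_odd _] := characteristic_odd hc.1; lia.
have weighted := reduced_weighted_sum_le n9 redA K_ge0 K_even hy hsum.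
have norm_sum : \sum_(i < n) c.2 i * A.2 i <= \sum_(i < n) `|c.2 i| * A.2 i.
  by apply: ler_sum => i _; apply: ler_wpM2r (ler_norm _); case: redA => _ [].
have split_sum : \sum_(i < n) (`|c.2 i| - 1) * A.2 i
    = \sum_(i < n) `|c.2 i| * A.2 i - \sum_(i < n) A.2 i.
  by rewrite -sumrB; apply: eq_bigr => i _; ring.
rewrite dot_c0; apply: le_trans (ler_norm _); rewrite /dot.
by move: weighted norm_sum; rewrite split_sum; nia.
Qed.

Lemma h_c_double c A :
  characteristic c -> A <> zero_cls n -> 2 * h_c c A = 2 + dot A A - `|dot c A|.
Proof. by move=> hc /eqP A_nz; rewrite /h_c (negbTE A_nz); have := hc A; lia. Qed.

End Classes.

Theorem mainTheorem9 (n : nat) (A : cls n) :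
  (n <= 9)%N ->
  A <> zero_cls n ->
  reduced A ->
  0 <= dot A A ->
  [/\ adjunction (c0 n),
      is_h A (h_c (c0 n) A),
      2 * h_c (c0 n) A = (A.1 - 1) * (A.1 - 2) - \sum_(i < n) A.2 i * (A.2 i - 1)
    & h_c (c0 n) A = ('C(`|A.1 - 1|%N, 2))%:Z - \sum_(i < n) ('C(`|A.2 i|%N, 2))%:Z].
Proof.
move=> n9 A_nz redA _.
have c0A_ge0 := dot_c0_ge0 n9 redA.
have h_c0 := h_c_double (@characteristic_c0 n) A_nz.
have double_h : 2 * h_c (c0 n) A = (A.1 - 1) * (A.1 - 2) - \sum_(i < n) A.2 i * (A.2 i - 1).
  by rewrite h_c0 ger0_norm // dot_c0 /dot sum_mul_pred; ring.
split => //.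
- exact: adjunction_c0.
- split=> [|c hc]; first by exists (c0 n); first exact: adjunction_c0.
  rewrite -(ler_pM2l (ltr0Sn _ 1)) h_c0 (h_c_double hc.1 A_nz) (ger0_norm c0A_ge0).
  by rewrite lerD2l lerN2 dot_c0_le_adjunction.
apply: (mulfI (_ : 2 != 0)) => //; rewrite double_h [RHS]mulrBr mulr_sumr.
have a_ge1 := reduced_ge1 A_nz redA.
rewrite bin2_int ?subr_ge0 // [in RHS](eq_bigr (fun i => A.2 i * (A.2 i - 1))) => [|i _].
  by ring.
by rewrite bin2_int //; case: redA => _ [].
Qed.
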